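(* For every $A\in\mathcal{B}$, with $g_{11},g_{12}$ as defined from $A$, $$\phi(A)=\begin{pmatrix}g_{11}&g_{12}\\ -\det(A)\,(1+t^{-1}+t)\,\overline{g_{12}} & \det(A)\,\overline{g_{11}}\end{pmatrix}.$$
   Context: For a matrix $A$ or Laurent polynomial/rational function $f$ in $t$, $\overline{A}$, $\overline{f}$ denote the result of substituting $t\mapsto t^{-1}$. Let $J_3=\begin{pmatrix}1&-t^{-1}&-t^{-1}\\-t&1&-t^{-1}\\-t&-t&1\end{pmatrix}$, $v=(t,t^2,t^3)$ (a row vector) and $\vec{1}=(1,1,1)^T$. The formal Burau group is $\mathcal{B}=\{A\in\mathrm{GL}(3,\mathbb{Z}[t,t^{-1}]) : vA=v,\ A\vec 1=\vec 1,\ \overline{A}J_3A^T=J_3\}$. For $A=(A_{ij})\in\mathcal{B}$ put, for $k=1,2$, $f_{k1}=A_{k1}(1+t+t^2)-1$, $f_{k2}=A_{k1}+A_{k2}(1+t)-1$, and $g_{kl}=f_{kl}/(t(1+t))$. Define $\phi(A)=\begin{pmatrix}g_{11}&g_{12}\\ t^{-1}g_{11}+(1+t)g_{21}& t^{-1}g_{12}+(1+t)g_{22}\end{pmatrix}$. *)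

(* Z[t,t^-1] is modelled inside the field of rational
   functions  F := Q-free fraction field  {fraction {poly int}} = Z(t). *)
From HB Require Import structures.
From mathcomp Require Import all_boot all_order all_algebra.
From mathcomp Require Import generic_quotient fraction.
Set Implicit Arguments. Unset Strict Implicit. Unset Printing Implicit Defensive.
Import GRing.Theory.
Local Open Scope ring_scope.
Local Open Scope quotient_scope.

Definition F : fieldType := {fraction {poly int}}.

Definition tt_ : F := tofrac ('X : {poly int}).

Definition polyF (p : {poly int}) : F := tofrac p.

Definition laurent (x : F) : Prop :=
  exists (p : {poly int}) (k : nat), x = polyF p / tt_ ^+ k.

Definition polyF_inv (p : {poly int}) : F :=
  (map_poly (fun c : int => c%:~R : F) p).[tt_^-1].

(* bar : substitution t |-> t^-1 on rational functions, computed on a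
   representative n/d (independent of the representative). *)
Definition bar (x : F) : F :=
  polyF_inv (\n_(repr x)) / polyF_inv (\d_(repr x)).

Definition barmx m n (A : 'M[F]_(m, n)) : 'M[F]_(m, n) := map_mx bar A.

Definition i0 : 'I_3 := @Ordinal 3 0 isT.
Definition i1 : 'I_3 := @Ordinal 3 1 isT.
Definition i2 : 'I_3 := @Ordinal 3 2 isT.
Definition j0 : 'I_2 := @Ordinal 2 0 isT.
Definition j1 : 'I_2 := @Ordinal 2 1 isT.

Definition J3 : 'M[F]_3 :=
  \matrix_(i < 3, j < 3)
    (if i == j then 1 else if (i < j)%N then - tt_^-1 else - tt_).

Definition vB : 'rV[F]_3 := \row_(j < 3) tt_ ^+ j.+1.
Definition one3 : 'cV[F]_3 := \col_(i < 3) 1.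

Definition in_GL3_laurent (A : 'M[F]_3) : Prop :=
  (forall i j, laurent (A i j)) /\
  exists B : 'M[F]_3, (forall i j, laurent (B i j)) /\ A *m B = 1%:M /\ B *m A = 1%:M.

Definition formal_Burau (A : 'M[F]_3) : Prop :=
  in_GL3_laurent A /\ vB *m A = vB /\ A *m one3 = one3 /\
  barmx A *m J3 *m A^T = J3.

(* k, l in {1,2} are encoded as indices 0,1 *)
Definition f_ (A : 'M[F]_3) (k : 'I_3) (l : nat) : F :=
  if l == 0%N then A k i0 * (1 + tt_ + tt_ ^+ 2) - 1
  else A k i0 + A k i1 * (1 + tt_) - 1.

Definition g_ (A : 'M[F]_3) (k : 'I_3) (l : nat) : F :=
  f_ A k l / (tt_ * (1 + tt_)).

Definition phi (A : 'M[F]_3) : 'M[F]_2 :=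
  \matrix_(i < 2, j < 2)
    (if i == j0 then g_ A i0 j
     else tt_^-1 * g_ A i0 j + (1 + tt_) * g_ A i1 j).

(* The vectors w1 = (t + t^2, -1, -1) and w2 = (0, t, -1) span the kernel
   of v, which A preserves because vA = v.  When A1 = 1 the numbers
   f_kl are the entries of A [w1 w2], and phi(A) is precisely the matrix of A
   on ker v in the basis (w1, w2).  Since A also fixes 1, which lies outside
   ker v, det phi(A) = det A.  The relation bar(A) J A^T = J says that A
   preserves the sesquilinear form with matrix J^-T; in the basis (w1, w2) its
   restriction to ker v is H = diag(1 + t^-1 + t, 1).  Finally, a 2x2 matrix M
   with bar(M)^T H M = H satisfies det M . bar(M)^T H = H adj M by Cramer's
   rule, and reading off two entries gives the second row of phi(A). *)

From HB Require Import structures.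
From mathcomp Require Import all_boot all_order all_algebra.
From mathcomp Require Import generic_quotient fraction.
From mathcomp Require Import zify ring.

Set Implicit Arguments.
Unset Strict Implicit.
Unset Printing Implicit Defensive.

Import GRing.Theory.
Local Open Scope ring_scope.
Local Open Scope quotient_scope.

Lemma ord2_cases (i : 'I_2) : i = j0 \/ i = j1.
Proof. by case: i => [[|[|//]]] ?; [left | right]; apply: val_inj. Qed.

Lemma ord3_cases (i : 'I_3) : [\/ i = i0, i = i1 | i = i2].
Proof.
by case: i => [[|[|[|//]]]] ?; [apply: Or31 | apply: Or32 | apply: Or33]; apply: val_inj.
Qed.

Lemma sum_ord2 (V : nmodType) (F : 'I_2 -> V) : \sum_(k < 2) F k = F j0 + F j1.
Proof. by rewrite !big_ord_recl big_ord0 addr0; congr (F _ + F _); apply: val_inj. Qed.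

Lemma sum_ord3 (V : nmodType) (F : 'I_3 -> V) :
  \sum_(k < 3) F k = F i0 + F i1 + F i2.
Proof.
by rewrite !big_ord_recl big_ord0 addr0 addrA; congr (F _ + F _ + F _); apply: val_inj.
Qed.

Lemma det_mx22 (R : comNzRingType) (M : 'M[R]_2) :
  \det M = M j0 j0 * M j1 j1 - M j0 j1 * M j1 j0.
Proof.
have lift01 : lift j0 ord0 = j1 by apply: val_inj.
have lift10 : lift j1 ord0 = j0 by apply: val_inj.
rewrite (expand_det_row _ j0) sum_ord2 /cofactor !det_mx11 !mxE /= lift01 lift10.
by rewrite expr0 expr1 mul1r mulN1r mulrN.
Qed.

Lemma det_intertwine (K : fieldType) n (A B T : 'M[K]_n) :
  T \in unitmx -> A *m T = T *m B -> \det A = \det B.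
Proof.
rewrite unitmxE unitfE => T_unit /(congr1 determinant).
by rewrite !det_mulmx mulrC => /(mulfI T_unit).
Qed.

Lemma mulmx_adj_form (R : comNzRingType) n (N H M : 'M[R]_n) :
  N *m H *m M = H -> \det M *: (N *m H) = H *m \adj M.
Proof. by move=> NHM; rewrite -{2}NHM -mulmxA mul_mx_adj mul_mx_scalar. Qed.

Lemma diag_form_mx22 (K : fieldType) (h : K) (N M : 'M[K]_2) : h != 0 ->
  N^T *m diag_mx (\row_(j < 2) if j == j0 then h else 1) *m M
    = diag_mx (\row_(j < 2) if j == j0 then h else 1) ->
  M j1 j0 = - \det M * h * N j0 j1 /\ M j1 j1 = \det M * N j0 j0.
Proof.
move=> h_neq0 /mulmx_adj_form NHM.
have lift01 : lift j0 ord0 = j1 by apply: val_inj.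
have lift10 : lift j1 ord0 = j0 by apply: val_inj.
have := congr1 (fun B : 'M_2 => B j0 j0) NHM; have := congr1 (fun B : 'M_2 => B j1 j0) NHM.
rewrite !mxE !sum_ord2 !mxE /cofactor !det_mx11 !mxE /= lift01 lift10 !add0n.
rewrite expr0 expr1 mulr1n mulr0n !(mulr0, mul0r, mul1r, addr0, add0r, mulN1r) => E10 E00.
split; first by apply: oppr_inj; rewrite -E10; ring.
by apply: (mulfI h_neq0); rewrite -E00; ring.
Qed.

Lemma tofrac_repr (R : idomainType) (x : {fraction R}) :
  x = tofrac \n_(repr x) / tofrac \d_(repr x).
Proof.
apply: (canRL (mulfK _)); first by rewrite tofrac_eq0 denom_ratioP.
rewrite -[x in x * _]reprK; set r := repr x.
unlock tofrac.
change (FracField.mul (\pi_{fraction R} r) (\pi_{fraction R} (Ratio \d_r 1))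
  = \pi_{fraction R} (Ratio \n_r 1)).
rewrite -FracField.pi_mul; apply/eqmodP.
rewrite /= FracField.equivfE /FracField.mulf !numden_Ratio ?oner_neq0 //.
  by rewrite !mulr1 mulrC.
all: by rewrite mulr1 denom_ratioP.
Qed.

Section FracMap.
Variables (R : idomainType) (K : fieldType) (f : {rmorphism R -> K}).
Hypothesis f_inj : injective f.

Definition frac_map (x : {fraction R}) : K := f \n_(repr x) / f \d_(repr x).

Lemma frac_map_div n d : d != 0 -> frac_map (tofrac n / tofrac d) = f n / f d.
Proof.
move=> d_neq0; rewrite /frac_map; set r := repr _.
have dr_neq0 : \d_r != 0 := denom_ratioP r.
have : n * \d_r = \n_r * d.
  apply/eqP; rewrite -tofrac_eq !tofracM -eqr_div ?tofrac_eq0 //.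
  by rewrite -tofrac_repr.
move/(congr1 f); rewrite !rmorphM /= => e.
by apply/eqP; rewrite eqr_div ?(raddf_eq0 _ f_inj) // e.
Qed.

Lemma frac_map_tofrac n : frac_map (tofrac n) = f n.
Proof. by rewrite -[tofrac n]divr1 -tofrac1 frac_map_div ?oner_eq0 // rmorph1 divr1. Qed.

Let fracP (x : {fraction R}) :
  exists n d, d != 0 /\ x = tofrac n / tofrac d.
Proof. by exists \n_(repr x), \d_(repr x); split; [exact: denom_ratioP | exact: tofrac_repr]. Qed.

Lemma frac_map_is_zmod_morphism : {morph frac_map : x y / x - y}.
Proof.
have fd_neq0 d : d != 0 -> f d != 0 by rewrite (raddf_eq0 _ f_inj).
have td_neq0 d : d != 0 -> tofrac d != 0 by rewrite tofrac_eq0.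
have frac_mapD x y : frac_map (x + y) = frac_map x + frac_map y.
  have [n1 [d1 [d1_neq0 ->]]] := fracP x; have [n2 [d2 [d2_neq0 ->]]] := fracP y.
  rewrite addf_div ?td_neq0 // -!rmorphM -rmorphD !frac_map_div ?mulf_neq0 //.
  by rewrite addf_div ?fd_neq0 // rmorphD !rmorphM.
have frac_mapN x : frac_map (- x) = - frac_map x.
  have [n [d [d_neq0 ->]]] := fracP x.
  by rewrite -mulNr -rmorphN !frac_map_div // rmorphN mulNr.
by move=> x y; rewrite frac_mapD frac_mapN.
Qed.

Lemma frac_map_is_monoid_morphism : monoid_morphism frac_map.
Proof.
split; first by rewrite -tofrac1 frac_map_tofrac rmorph1.
move=> x y; have [n1 [d1 [d1_neq0 ->]]] := fracP x.
have [n2 [d2 [d2_neq0 ->]]] := fracP y.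
rewrite mulf_div -!rmorphM !frac_map_div ?mulf_neq0 //.
by rewrite !rmorphM mulf_div.
Qed.

End FracMap.

(* [burau_J], [burau_v], [ones3], [burau_f], [burau_g] and [burau_phi] are J3,
   vB, one3, f_, g_ and phi over an arbitrary field with a chosen t; the
   statement is the instance K = F, t = tt_, sigma = bar.  Working over an
   abstract field also keeps [ring] and [field] away from the quotient type F,
   on which they do not terminate. *)
Section ReducedBurau.
Variables (K : fieldType) (t : K).
Hypotheses (t_neq0 : t != 0) (t1_neq0 : 1 + t != 0) (t2_neq0 : 1 + t + t ^+ 2 != 0).

Definition burau_J : 'M[K]_3 :=
  \matrix_(i < 3, j < 3) (if i == j then 1 else if (i < j)%N then - t^-1 else - t).
Definition burau_v : 'rV[K]_3 := \row_(j < 3) t ^+ j.+1.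
Definition ones3 : 'cV[K]_3 := \col_(i < 3) 1.

Definition burau_f (A : 'M[K]_3) (k : 'I_3) (l : nat) : K :=
  if l == 0%N then A k i0 * (1 + t + t ^+ 2) - 1
  else A k i0 + A k i1 * (1 + t) - 1.
Definition burau_g (A : 'M[K]_3) (k : 'I_3) (l : nat) : K :=
  burau_f A k l / (t * (1 + t)).
Definition burau_phi (A : 'M[K]_3) : 'M[K]_2 :=
  \matrix_(i < 2, j < 2)
    (if i == j0 then burau_g A i0 j
     else t^-1 * burau_g A i0 j + (1 + t) * burau_g A i1 j).

Definition ker_basis : 'M[K]_(3, 2) :=
  \matrix_(i < 3, j < 2)
    (if j == j0 then (if i == i0 then t + t ^+ 2 else -1)
     else if i == i0 then 0 else if i == i1 then t else -1).

Lemma burau_v_ker : burau_v *m ker_basis = 0.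
Proof.
apply/matrixP => i j; rewrite !mxE sum_ord3 !mxE /=.
by case: (ord2_cases j) => ->; rewrite /=; ring.
Qed.

Lemma burau_f_ker A : A *m ones3 = ones3 ->
  forall k (l : 'I_2), burau_f A k l = (A *m ker_basis) k l.
Proof.
move=> A1 k l; have Ak2 : A k i2 = 1 - A k i0 - A k i1.
  have := congr1 (fun M : 'cV_3 => M k 0) A1.
  by rewrite /ones3 !mxE sum_ord3 !mxE !mulr1 => <-; ring.
rewrite mxE sum_ord3 !mxE /= /burau_f Ak2.
by case: (ord2_cases l) => -> /=; ring.
Qed.

Lemma burau_phi_ker A : burau_v *m A = burau_v -> A *m ones3 = ones3 ->
  A *m ker_basis = ker_basis *m burau_phi A.
Proof.
move=> vA A1; have fE := burau_f_ker A1.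
have kerAW : burau_v *m (A *m ker_basis) = 0 by rewrite mulmxA vA burau_v_ker.
move: (A *m ker_basis) kerAW fE => AW kerAW fE.
apply/matrixP => k l.
have kerAW_l : t ^+ 1 * AW i0 l + t ^+ 2 * AW i1 l + t ^+ 3 * AW i2 l = 0.
  by have := congr1 (fun M : 'rV_2 => M 0 l) kerAW; rewrite !mxE sum_ord3 !mxE.
rewrite mxE sum_ord2 !mxE /= /burau_g !fE.
case: (ord3_cases k) => ->; rewrite /=.
- by field; rewrite t_neq0 t1_neq0.
- by field; rewrite t_neq0 t1_neq0.
- (* The last row of A W is determined by v A W = 0. *)
  apply/eqP; rewrite -subr_eq0 -(mulr0 (t ^- 3)) -kerAW_l; apply/eqP.
  by field; rewrite t_neq0 t1_neq0.
Qed.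

Lemma ker_basis_ones3_unit : (row_mx ker_basis ones3 : 'M_3) \in unitmx.
Proof.
(* Multiplying on the left by [col_mx (pid_mx 2) burau_v] gives a block
   triangular matrix, since v kills ker_basis. *)
have : col_mx (pid_mx 2) burau_v *m row_mx ker_basis ones3 \in unitmx.
  rewrite mul_col_row burau_v_ker unitmxE det_ublock unitfE.
  suff -> : \det (pid_mx 2 *m ker_basis) * \det (burau_v *m ones3)
          = t ^+ 3 * ((1 + t) * (1 + t + t ^+ 2)) by rewrite !mulf_neq0 ?expf_neq0.
  rewrite det_mx22 det_mx11 !mxE !sum_ord3 !mxE /=.
  ring.
by rewrite unitmx_mul => /andP[].
Qed.

Lemma det_burau_phi A : burau_v *m A = burau_v -> A *m ones3 = ones3 ->
  \det (burau_phi A) = \det A.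
Proof.
move=> vA A1.
have AT : A *m row_mx ker_basis ones3
          = row_mx ker_basis ones3 *m block_mx (burau_phi A) 0 0 1.
  by rewrite mul_mx_row A1 burau_phi_ker // mul_row_block !mulmx0 mulmx1 addr0 add0r.
by rewrite (det_intertwine ker_basis_ones3_unit AT) (det_ublock (burau_phi A)) det1 mulr1.
Qed.

Definition dual_basis : 'M[K]_(3, 2) :=
  \matrix_(i < 3, j < 2)
    (if j == j0 then
       (if i == i0 then t else if i == i1 then - t ^+ 2 / (1 + t) else - t / (1 + t))
     else if i == i0 then 0 else if i == i1 then t / (1 + t) else - t / (1 + t)).

Lemma burau_J_dual : burau_J^T *m dual_basis = ker_basis.
Proof.
apply/matrixP => i j; rewrite !mxE sum_ord3 !mxE /=.
by case: (ord3_cases i) => ->; case: (ord2_cases j) => -> /=; field; rewrite ?t_neq0 ?t1_neq0.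
Qed.

Definition reduced_form : 'M[K]_2 :=
  diag_mx (\row_(j < 2) if j == j0 then 1 + t^-1 + t else 1).

Variable sigma : {rmorphism K -> K}.
Hypothesis sigma_t : sigma t = t^-1.

Lemma map_burau_J : map_mx sigma burau_J = burau_J^T.
Proof.
apply/matrixP => i j; rewrite !mxE.
case: (ord3_cases i) => ->; case: (ord3_cases j) => -> /=;
  by rewrite ?rmorph1 ?rmorphN ?fmorphV ?sigma_t ?invrK.
Qed.

Lemma reduced_formE : (map_mx sigma ker_basis)^T *m dual_basis = reduced_form.
Proof.
apply/matrixP => i j; rewrite !mxE sum_ord3 !mxE.
case: (ord2_cases i) => ->; case: (ord2_cases j) => -> /=;
  rewrite ?rmorph0 ?rmorphN ?rmorph1 ?rmorphD ?rmorphXn ?sigma_t ?mulr1n ?mulr0n;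
  by field; rewrite ?t_neq0 ?t1_neq0.
Qed.

Lemma burau_phi_unitary A : A \in unitmx -> burau_v *m A = burau_v ->
  A *m ones3 = ones3 -> map_mx sigma A *m burau_J *m A^T = burau_J ->
  (map_mx sigma (burau_phi A))^T *m reduced_form *m burau_phi A = reduced_form.
Proof.
move=> A_unit vA A1 unitary; set M := burau_phi A.
have AW : A *m ker_basis = ker_basis *m M := burau_phi_ker vA A1.
have AW_bar : map_mx sigma A *m map_mx sigma ker_basis
              = map_mx sigma ker_basis *m map_mx sigma M by rewrite -!map_mxM AW.
have JX_bar : burau_J *m map_mx sigma dual_basis = map_mx sigma ker_basis.
  by rewrite -burau_J_dual map_mxM -map_trmx map_burau_J trmxK.
have AJA : A *m burau_J^T *m (map_mx sigma A)^T = burau_J^T.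
  by have := congr1 trmx unitary; rewrite !trmx_mul trmxK mulmxA.
(* Z = 0 would say that A preserves the form J^-T on ker v; the weaker facts
   J^T Z = 0 and bar(W) = J bar(X) suffice and avoid inverting J. *)
set Z := (map_mx sigma A)^T *m dual_basis *m M - dual_basis.
have JZ : burau_J^T *m Z = 0.
  apply: (can_inj (mulKmx A_unit)); rewrite mulmx0 !mulmxBr !mulmxA AJA burau_J_dual.
  by rewrite -(mulmxA A) burau_J_dual AW subrr.
have WZ : (map_mx sigma ker_basis)^T *m Z = 0.
  by rewrite -JX_bar trmx_mul -mulmxA JZ mulmx0.
apply/eqP; rewrite -reduced_formE -subr_eq0 -WZ mulmxBr !mulmxA.
by rewrite -trmx_mul -AW_bar trmx_mul.
Qed.

Lemma burau_phiE A : A \in unitmx -> burau_v *m A = burau_v ->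
  A *m ones3 = ones3 -> map_mx sigma A *m burau_J *m A^T = burau_J ->
  burau_phi A =
  \matrix_(i < 2, j < 2)
    (if i == j0 then (if j == j0 then burau_g A i0 0 else burau_g A i0 1)
     else if j == j0 then - \det A * (1 + t^-1 + t) * sigma (burau_g A i0 1)
     else \det A * sigma (burau_g A i0 0)).
Proof.
move=> A_unit vA A1 unitary.
have s_neq0 : 1 + t^-1 + t != 0.
  by rewrite (_ : _ + _ = (1 + t + t ^+ 2) / t) ?mulf_neq0 ?invr_neq0 //; field.
have [phi10 phi11] := diag_form_mx22 s_neq0 (burau_phi_unitary A_unit vA A1 unitary).
rewrite det_burau_phi // !mxE /= in phi10 phi11.
apply/matrixP => i j; rewrite mxE.
by case: (ord2_cases i) => ->; case: (ord2_cases j) => -> //=; rewrite ?mxE.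
Qed.

End ReducedBurau.

Fact tt_inv_comm : commr_rmorph (intmul (1 : F)) tt_^-1.
Proof. by move=> c; apply: mulrC. Qed.

HB.instance Definition _ := GRing.RMorphism.copy polyF_inv (horner_morph tt_inv_comm).

Lemma tt_neq0 : tt_ != 0.
Proof. by rewrite tofrac_eq0 polyX_eq0. Qed.

Lemma tt1_neq0 : 1 + tt_ != 0.
Proof.
rewrite -tofrac1 -rmorphD tofrac_eq0; apply/eqP => /polyP/(_ 0%N)/eqP.
by rewrite !coefE.
Qed.

Lemma tt2_neq0 : 1 + tt_ + tt_ ^+ 2 != 0.
Proof.
rewrite -tofrac1 -rmorphXn -!rmorphD tofrac_eq0; apply/eqP => /polyP/(_ 0%N)/eqP.
by rewrite !coefE.
Qed.

Lemma polyFE (p : {poly int}) : polyF p = (map_poly (intmul (1 : F)) p).[tt_].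
Proof.
rewrite /polyF -{1}[p]coefK poly_def rmorph_sum (horner_coef_wide _ (size_poly _ _)).
apply: eq_bigr => i _; rewrite coef_map -mul_polyC rmorphM rmorphXn /=.
by rewrite -{1}[p`_i]intz !rmorph_int.
Qed.

Lemma polyF_inv_rev (p : {poly int}) n : size p = n.+1 ->
  tt_ ^+ n * polyF_inv p = polyF (\poly_(i < n.+1) p`_(n - i)).
Proof.
move=> size_p; rewrite polyFE (@horner_coef_wide _ n.+1); last first.
  exact: leq_trans (size_poly _ _) (size_poly _ _).
rewrite /polyF_inv (@horner_coef_wide _ n.+1) ?mulr_sumr; last first.
  by rewrite -size_p size_poly.
rewrite [RHS](reindex_inj rev_ord_inj); apply: eq_bigr => i _ /=.
have lt_in := ltn_ord i.
rewrite !coef_map /= coef_poly.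
have -> : (n.+1 - i.+1 < n.+1)%N by lia.
have -> : (n - (n.+1 - i.+1) = i)%N by lia.
have n_split : n = (i + (n.+1 - i.+1))%N by lia.
by rewrite [X in tt_ ^+ X]n_split exprD exprVn [LHS]mulrC mulrA mulfVK // expf_neq0 // tt_neq0.
Qed.

Lemma polyF_inv_inj : injective polyF_inv.
Proof.
apply: raddf_inj => p pF0; apply/eqP/negPn/negP => p_neq0.
have size_p : size p = (size p).-1.+1 by rewrite prednK // size_poly_gt0.
have := polyF_inv_rev size_p; rewrite pF0 mulr0 => /esym/eqP.
rewrite tofrac_eq0 => /eqP/polyP/(_ 0%N); rewrite coef_poly coef0 subn0 /=.
by move/eqP; rewrite -lead_coefE lead_coef_eq0 (negPf p_neq0).
Qed.

HB.instance Definition _ :=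
  GRing.isZmodMorphism.Build F F bar (frac_map_is_zmod_morphism polyF_inv_inj).
HB.instance Definition _ :=
  GRing.isMonoidMorphism.Build F F bar (frac_map_is_monoid_morphism polyF_inv_inj).

Lemma bar_tt : bar tt_ = tt_^-1.
Proof.
have polyF_invX : polyF_inv 'X = tt_^-1 by rewrite /polyF_inv map_polyX hornerX.
exact: (etrans (frac_map_tofrac polyF_inv_inj _) polyF_invX).
Qed.

Theorem corollary3p6 (A : 'M[F]_3) :
  formal_Burau A ->
  phi A =
  \matrix_(i < 2, j < 2)
    (if i == j0 then (if j == j0 then g_ A i0 0 else g_ A i0 1)
     else if j == j0 then - \det A * (1 + tt_^-1 + tt_) * bar (g_ A i0 1)
     else \det A * bar (g_ A i0 0)).
Proof.
case=> [[_ [B [_ [AB _]]]] [vA [A1 unitary]]].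
exact: (burau_phiE tt_neq0 tt1_neq0 tt2_neq0 bar_tt (mulmx1_unit AB).1 vA A1 unitary).
Qed.
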